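(* Let $n \ge 3$ be an integer. For a binary string $y$ let $r_y$ be its number of runs, $u_y$ its number of runs of length one, and $b_y$ the number of runs of length one occurring at the start or end of $y$. Define \[ f'(r,u,b) = \begin{cases} \frac{1}{r}\left(1 - \frac{u-b}{r^2}\right) & \text{if } u-b \ge 2,\\ \frac{1}{r} & \text{if } u-b \le 1,\end{cases} \] and let $z \in \mathbb{R}^{[2]^{n-1}}$ be given by $z_y = f'(r_y,u_y,b_y)$. Then \[ \sum_{y \in [2]^{n-1}} z_y \ \ge\ \frac{2^n - 2}{n+1}\left(1 + \frac{1}{n-1} - \frac{3}{(n-1)(n-2)}\right). \]
   Context: $[2]=\{0,1\}$ and $[2]^m$ is the set of binary strings of length $m$. A run of a string is a maximal block of consecutive equal symbols. *)

From mathcomp Require Import all_boot all_order all_algebra.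
Set Implicit Arguments. Unset Strict Implicit. Unset Printing Implicit Defensive.
Import Order.TTheory GRing.Theory Num.Theory.

Fixpoint run_lengths (s : seq bool) : seq nat :=
  match s with
  | [::] => [::]
  | x :: s' =>
      match s' with
      | [::] => [:: 1%N]
      | y :: _ =>
          let rl := run_lengths s' in
          if x == y then (head 0%N rl).+1 :: behead rl else 1%N :: rl
      end
  end.

Definition nruns (s : seq bool) : nat := size (run_lengths s).
Definition nruns1 (s : seq bool) : nat := count (pred1 1%N) (run_lengths s).
Definition nruns1_ends (s : seq bool) : nat :=
  let rl := run_lengths s in
  count (fun i => (nth 0%N rl i == 1%N) && ((i == 0%N) || (i == (size rl).-1)))
        (iota 0 (size rl)).

Local Open Scope ring_scope.

Definition fprime (R : realFieldType) (r u b : nat) : R :=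
  if (2 <= u - b)%N then (r%:R)^-1 * (1 - (u - b)%:R / (r%:R ^+ 2))
  else (r%:R)^-1.

Definition zval (R : realFieldType) (s : seq bool) : R :=
  fprime R (nruns s) (nruns1 s) (nruns1_ends s).

From mathcomp Require Import all_boot all_order all_algebra.
From mathcomp Require Import ring lra zify.
Import Order.TTheory GRing.Theory Num.Theory.
Set Implicit Arguments. Unset Strict Implicit.

(* Let v be the number of runs of length one other than the first run.  Since
   u - b <= v, every z_y is at least 1/r - v/r^3.  Split the strings by their
   first symbol; the number of runs is then one plus the number of symbol
   changes, so the sums of G(r) and of v G(r) over strings of length m are
   binomial transforms, obtained from Pascal's recursion.  This gives
   sum 1/r = 2(2^m - 1)/m, while (k+1)/(k+2)^3 <= 1/((k+1)(k+2)) gives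
   sum v/r^3 <= 2(2^m - 1)/(m(m-1)); for m = n - 1 the difference of the two
   is exactly the claimed bound. *)

Lemma run_lengths_cons2 x y t : run_lengths (x :: y :: t) =
  if x == y then (head 0%N (run_lengths (y :: t))).+1 :: behead (run_lengths (y :: t))
  else 1%N :: run_lengths (y :: t).
Proof. by []. Qed.

Lemma run_lengths_cons y t : exists h l, run_lengths (y :: t) = h.+1 :: l.
Proof.
elim: t y => [|z t IH] y; first by exists 0%N, [::].
have [h [l rl_zt]] := IH z.
rewrite run_lengths_cons2 rl_zt.
by case: (y == z); [exists h.+1, l | exists 0%N, (h.+1 :: l)].
Qed.

Lemma nruns_cons2 x y t : nruns (x :: y :: t) = (nruns (y :: t) + (x != y))%N.
Proof.
rewrite /nruns run_lengths_cons2; have [h [l ->]] := run_lengths_cons y t.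
by case: (x == y); rewrite /= ?addn0 ?addn1.
Qed.

Definition first_run1 (s : seq bool) : bool := head 0%N (run_lengths s) == 1%N.

Definition nruns1_tail (s : seq bool) : nat :=
  count (pred1 1%N) (behead (run_lengths s)).

Lemma nruns1_split s : nruns1 s = (first_run1 s + nruns1_tail s)%N.
Proof. by rewrite /nruns1 /first_run1 /nruns1_tail; case: (run_lengths s). Qed.

Lemma first_run1_le_ends s : (first_run1 s <= nruns1_ends s)%N.
Proof.
by rewrite /first_run1 /nruns1_ends; case: (run_lengths s) => [|h l] //=; case: (h == 1%N).
Qed.

Lemma nruns1_sub_ends_le s : (nruns1 s - nruns1_ends s <= nruns1_tail s)%N.
Proof. by rewrite nruns1_split; have := first_run1_le_ends s; lia. Qed.

Lemma first_run1_cons2 x y t : first_run1 (x :: y :: t) = (x != y).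
Proof.
rewrite /first_run1 run_lengths_cons2; have [h [l ->]] := run_lengths_cons y t.
by case: (x == y).
Qed.

Lemma nruns1_tail_cons2 x y t :
  nruns1_tail (x :: y :: t) = (nruns1_tail (y :: t) + (x != y) * first_run1 (y :: t))%N.
Proof.
rewrite /nruns1_tail /first_run1 run_lengths_cons2; have [h [l ->]] := run_lengths_cons y t.
by case: (x == y); rewrite /= ?mul0n ?mul1n ?addn0 // addnC.
Qed.

Lemma neq_negb (x : bool) : x != ~~ x.
Proof. by case: x. Qed.

Local Open Scope ring_scope.

Definition zval_lb (R : realFieldType) (s : seq bool) : R :=
  (nruns s)%:R^-1 - (nruns1_tail s)%:R / (nruns s)%:R ^+ 3.

Lemma zval_lb_le (R : realFieldType) s : zval_lb R s <= zval R s.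
Proof.
rewrite /zval_lb /zval /fprime; have [->|r_gt0] := posnP (nruns s).
  by rewrite invr0 expr0n /= invr0 mulr0 subr0 mul0r; case: ifP.
have r_pos : (0 : R) < (nruns s)%:R by rewrite ltr0n.
have r3_pos : (0 : R) < (nruns s)%:R ^+ 3 by rewrite exprn_gt0.
have tail_ge0 : (0 : R) <= (nruns1_tail s)%:R / (nruns s)%:R ^+ 3.
  by rewrite divr_ge0 ?ler0n // ltW.
case: ifP => _; last by lra.
have -> : (nruns s)%:R^-1 * (1 - (nruns1 s - nruns1_ends s)%:R / (nruns s)%:R ^+ 2)
   = (nruns s)%:R^-1 - (nruns1 s - nruns1_ends s)%:R / (nruns s)%:R ^+ 3 :> R.
  by field; rewrite gt_eqF.
by rewrite lerB // ler_pM2r ?invr_gt0 // ler_nat nruns1_sub_ends_le.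
Qed.

Section BinomialSums.
Variable R : realFieldType.

(* [binom_sum L G] will be the sum of [G (nruns (x :: t))] over the [L]-tuples
   [t]: 'C(L, k) of them have [k] changes of symbol, i.e. [k.+1] runs. *)
Definition binom_sum L (G : nat -> R) : R := \sum_(k < L.+1) 'C(L, k)%:R * G k.+1.

Lemma eq_binom_sum L G1 G2 : G1 =1 G2 -> binom_sum L G1 = binom_sum L G2.
Proof. by move=> eqG; apply: eq_bigr => k _; rewrite eqG. Qed.

Lemma binom_sumD L G1 G2 :
  binom_sum L (fun j => G1 j + G2 j) = binom_sum L G1 + binom_sum L G2.
Proof. by rewrite /binom_sum -big_split; apply: eq_bigr => k _; rewrite mulrDr. Qed.

Lemma binom_sumS L G : binom_sum L.+1 G = binom_sum L G + binom_sum L (fun j => G j.+1).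
Proof.
rewrite /binom_sum big_ord_recl bin0 addrC.
under eq_bigr do rewrite /bump /= binS natrD mulrDl.
rewrite big_split /= addrAC; congr (_ + _).
rewrite [in RHS]big_ord_recl bin0 [in RHS]addrC; congr (_ + _).
by rewrite big_ord_recr /= bin_small // mul0r addr0.
Qed.

Lemma big_tuple_cons (T : finType) (F : seq T -> R) L :
  \sum_(t : L.+1.-tuple T) F t = \sum_(x : T) \sum_(t : L.-tuple T) F (x :: t).
Proof.
rewrite pair_big /= (reindex (fun p : T * L.-tuple T => [tuple of p.1 :: p.2])) /=.
  by apply: eq_big.
exists (fun t : L.+1.-tuple T => (thead t, [tuple of behead t])) => [[x t] _ | t _] /=.
  by congr (_, _); apply: val_inj.
by rewrite [t in RHS]tuple_eta.
Qed.

Lemma big_tuple0 (T : finType) (F : 0.-tuple T -> R) : \sum_(t : 0.-tuple T) F t = F [tuple].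
Proof. by rewrite (big_pred1 [tuple]) // => t; apply/esym/eqP; apply: tuple0. Qed.

Lemma big_tuple_cons_split (F : seq bool -> R) L x :
  \sum_(t : L.+1.-tuple bool) F (x :: t) =
  \sum_(t : L.-tuple bool) F (x :: x :: t) + \sum_(t : L.-tuple bool) F (x :: ~~ x :: t).
Proof.
rewrite (big_tuple_cons (fun t => F (x :: t))) big_bool.
by case: x => //=; rewrite addrC.
Qed.

Lemma sum_nruns_cons L G x :
  \sum_(t : L.-tuple bool) G (nruns (x :: t)) = binom_sum L G.
Proof.
elim: L G x => [|L IH] G x.
  by rewrite big_tuple0 /binom_sum big_ord1 mul1r.
rewrite (big_tuple_cons_split (fun s => G (nruns s))).
under eq_bigr do rewrite nruns_cons2 eqxx addn0.
under [X in _ + X]eq_bigr do rewrite nruns_cons2 neq_negb addn1.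
by rewrite (IH G x) (IH (fun j => G j.+1) (~~ x)) binom_sumS.
Qed.

Lemma sum_first_run1_cons L G x :
  \sum_(t : L.+1.-tuple bool) (first_run1 (x :: t))%:R * G (nruns (x :: t)) =
  binom_sum L (fun j => G j.+1).
Proof.
rewrite (big_tuple_cons_split (fun s => (first_run1 s)%:R * G (nruns s))).
rewrite big1 ?add0r => [|t _]; last by rewrite first_run1_cons2 eqxx mul0r.
rewrite -(sum_nruns_cons L _ (~~ x)); apply: eq_bigr => t _.
by rewrite first_run1_cons2 nruns_cons2 neq_negb addn1 mul1r.
Qed.

Lemma sum_nruns1_tail_cons L G x :
  \sum_(t : L.+1.-tuple bool) (nruns1_tail (x :: t))%:R * G (nruns (x :: t)) =
  binom_sum L (fun j => j%:R * G j.+1).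
Proof.
elim: L G x => [|L IH] G x;
  rewrite (big_tuple_cons_split (fun s => (nruns1_tail s)%:R * G (nruns s))).
  rewrite !big_tuple0 /= !nruns1_tail_cons2 !nruns_cons2 neq_negb eqxx /=.
  by rewrite /binom_sum big_ord1 mul0r add0r !mul1r.
under eq_bigr do rewrite nruns1_tail_cons2 nruns_cons2 eqxx mul0n !addn0.
under [X in _ + X]eq_bigr do
  rewrite nruns1_tail_cons2 nruns_cons2 neq_negb mul1n addn1 natrD mulrDl.
rewrite big_split /= addrA (IH G x) (IH (fun j => G j.+1) (~~ x)).
rewrite (sum_first_run1_cons L (fun j => G j.+1)) -addrA -binom_sumD binom_sumS.
by congr (_ + _); apply: eq_binom_sum => j; rewrite mulrSr mulrDl mul1r.
Qed.

End BinomialSums.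

Lemma sum_binomial N : (\sum_(k < N.+1) 'C(N, k) = 2 ^ N)%N.
Proof.
have := expnDn 1 1 N; rewrite addn1 => ->.
by apply: eq_bigr => k _; rewrite !exp1n !muln1.
Qed.

Lemma mul_bin_diag2 N k : ('C(N, k) * (N.+1 * N.+2) = 'C(N.+2, k.+2) * (k.+1 * k.+2))%N.
Proof.
have E1 := mul_bin_diag N.+1 k; have E2 := mul_bin_diag N.+2 k.+1; rewrite /= in E1 E2.
have E1' := congr1 (muln N.+2) E1; have E2' := congr1 (muln k.+1) E2.
nia.
Qed.

Section Evaluation.
Variable R : realFieldType.

Lemma binom_sum_inv N :
  binom_sum N (fun j => (j%:R : R)^-1) = ((2 ^ N.+1)%:R - 1) / N.+1%:R.
Proof.
rewrite /binom_sum (eq_bigr (fun k : 'I_N.+1 => 'C(N.+1, k.+1)%:R / N.+1%:R)); last first.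
  move=> k _; apply/eqP; rewrite eqr_div ?pnatr_eq0 //; apply/eqP.
  by rewrite -!natrM mulnC (mul_bin_diag N.+1) mulnC.
rewrite -mulr_suml -natr_sum -(sum_binomial N.+1) big_ord_recl bin0.
by rewrite natrD addrAC subrr add0r.
Qed.

Lemma binom_sum_cube_le N :
  binom_sum N (fun j => (j%:R : R) / j.+1%:R ^+ 3)
  <= ((2 ^ N.+2)%:R - 1) / (N.+1%:R * N.+2%:R).
Proof.
have Npos : (0 : R) < N.+1%:R * N.+2%:R by rewrite mulr_gt0 ?ltr0n.
apply: (@le_trans _ _ (\sum_(k < N.+1) 'C(N.+2, k.+2)%:R / (N.+1%:R * N.+2%:R))).
  apply: ler_sum => k _.
  have kpos : (0 : R) < k.+1%:R * k.+2%:R by rewrite mulr_gt0 ?ltr0n.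
  have -> : 'C(N.+2, k.+2)%:R / (N.+1%:R * N.+2%:R) = 'C(N, k)%:R / (k.+1%:R * k.+2%:R) :> R.
    apply/eqP; rewrite eqr_div ?mulf_neq0 ?pnatr_eq0 //; apply/eqP.
    by rewrite -!natrM mul_bin_diag2.
  rewrite ler_wpM2l ?ler0n // ler_pdivrMr ?exprn_gt0 ?ltr0n //.
  by rewrite mulrC ler_pdivlMr // -!natrX -!natrM ler_nat; nia.
rewrite -mulr_suml; apply: ler_wpM2r; first by rewrite invr_ge0 ltW.
rewrite -natr_sum lerBrDr -(natrD _ _ 1) ler_nat -(sum_binomial N.+2) !big_ord_recl.
by rewrite addnC leq_add2l leq_addl.
Qed.

Lemma sum_zval_ge L :
  2 * (((2 ^ L.+2)%:R - 1) / L.+2%:R - ((2 ^ L.+2)%:R - 1) / (L.+1%:R * L.+2%:R))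
  <= \sum_(y : L.+2.-tuple bool) zval R y.
Proof.
have sum_lb x : \sum_(t : L.+1.-tuple bool) zval_lb R (x :: t) =
    binom_sum L.+1 (fun j => (j%:R : R)^-1) - binom_sum L (fun j => j%:R / j.+1%:R ^+ 3).
  rewrite /zval_lb sumrB (sum_nruns_cons _ (fun j => (j%:R : R)^-1)).
  by rewrite (sum_nruns1_tail_cons _ (fun j => ((j%:R : R) ^+ 3)^-1)).
apply: (le_trans _ (ler_sum _ (fun (y : L.+2.-tuple bool) _ => zval_lb_le R y))).
rewrite (big_tuple_cons (zval_lb R)) big_bool /= !sum_lb binom_sum_inv.
have := binom_sum_cube_le L.
by set A := _ / L.+2%:R; set B := _ / (_ * _); set X := binom_sum _ _; lra.
Qed.

End Evaluation.

Theorem lemma2 (R : realFieldType) (n : nat) (hn : (3 <= n)%N) :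
  \sum_(y : (n.-1).-tuple bool) zval R y >=
  ((2 ^ n)%:R - 2) / (n.+1)%:R *
    (1 + ((n.-1)%:R)^-1 - 3 / ((n.-1)%:R * (n.-2)%:R)).
Proof.
case: n hn => [|[|[|L]]] // _ /=; apply: le_trans (sum_zval_ge R L).
rewrite le_eqVlt; apply/predU1P; left.
have L_ge0 : (0 : R) <= L%:R by exact: ler0n.
rewrite expnS natrM; field.
by apply/and3P; split; apply/negbT/gt_eqF; lra.
Qed.
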